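(* Let $\alpha,\beta\in\mathbb{R}$ with $\alpha\ne0$, let $\{c_k\}_{k\ge0}$ be a sequence of nonzero real numbers, and set $q_k(x)=c_k(\alpha x+\beta)^k$. Let $\{\gamma_n\}_{n\ge0}$ be real numbers and let $T:\mathbb{R}[x]\to\mathbb{R}[x]$ be the linear operator with $T[q_n]=\gamma_nq_n$ for all $n\ge0$. Writing $T=\sum_{k\ge0}Q_k(x)D^k$, we have $Q_0=\gamma_0$ and for every $k\ge1$ \[Q_k(x)=\frac{(-1)^k(\alpha x+\beta)^k}{k!\,\alpha^k}\Big(\gamma_0-\sum_{j=1}^k\binom{k}{j}(-1)^{j+1}\gamma_j\Big).\] Consequently each $Q_k$ is either identically zero or of degree exactly $k$, and $T$ is monotone.
   Context: $D=\frac{d}{dx}$. Every linear operator $T:\mathbb{R}[x]\to\mathbb{R}[x]$ can be written uniquely as $T=\sum_{k=0}^\infty Q_k(x)D^k$ with $Q_k\in\mathbb{R}[x]$ (meaning $T[p]=\sum_kQ_kD^k[p]$ for all polynomials $p$). $T$ is monotone if $\deg Q_k\le\deg Q_l$ whenever $k<l$ and $Q_k\not\equiv0$, $Q_l\not\equiv0$. *)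

From HB Require Import structures.
From mathcomp Require Import all_boot all_order all_algebra.
Set Implicit Arguments. Unset Strict Implicit. Unset Printing Implicit Defensive.
Import Order.TTheory GRing.Theory Num.Theory.
Local Open Scope ring_scope.

(* T = sum_k Q_k D^k : T[p] = sum_k Q_k * p^(k); the sum is finite since
   p^(k) = 0 for k >= size p. *)
Definition diff_op_rep (R : realFieldType) (T : {poly R} -> {poly R})
  (Q : nat -> {poly R}) : Prop :=
  forall p : {poly R}, T p = \sum_(k < size p) Q k * p^`(k).

(* monotone: deg Q_k <= deg Q_l whenever k < l and Q_k, Q_l nonzero
   (deg p = (size p).-1 for p <> 0). *)
Definition monotone_rep (R : realFieldType) (Q : nat -> {poly R}) : Prop :=
  forall k l : nat, (k < l)%N -> Q k != 0 -> Q l != 0 ->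
    ((size (Q k)).-1 <= (size (Q l)).-1)%N.

From HB Require Import structures.
From mathcomp Require Import all_boot all_order all_algebra ring.
Set Implicit Arguments. Unset Strict Implicit. Unset Printing Implicit Defensive.
Import GRing.Theory Num.Theory.
Local Open Scope ring_scope.

(* With L = alpha x + beta, the k-th derivative of L^n is n^_k alpha^k L^(n-k).
   Hence Q_k = (Delta^k gamma)(0) / (k! alpha^k) L^k gives
   sum_k Q_k (L^n)^(k) = (sum_k C(n,k) (Delta^k gamma)(0)) L^n = gamma_n L^n
   by Newton's forward difference formula; since the L^n span R[x] degree by
   degree, this is a representation of T.  It is the only one: testing on x^k,
   whose k-th derivative is the nonzero constant k!, determines Q_k from
   Q_0, ..., Q_(k-1). *)

Section ForwardDifference.
Variable R : comPzRingType.
Implicit Type g : nat -> R.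

Definition forward_diff g k :=
  \sum_(j < k.+1) 'C(k, j)%:R * (-1) ^+ (k + j) * g j.

Lemma forward_diffS g k :
  forward_diff g k.+1 + forward_diff g k = forward_diff (fun j => g j.+1) k.
Proof.
set t := \sum_(j < k) 'C(k, j.+1)%:R * (-1) ^+ (k + j) * g j.+1.
have -> : forward_diff g k.+1 = (-1) ^+ k.+1 * g 0%N + forward_diff (fun j => g j.+1) k + t.
  rewrite /forward_diff big_ord_recl bin0 addn0 mul1r -addrA; congr (_ + _).
  under eq_bigr => j _ do rewrite lift0 addSn addnS !exprS mulN1r mulN1r opprK binS natrD !mulrDl.
  by rewrite big_split addrC /= big_ord_recr /= bin_small // !mul0r addr0.
have -> : forward_diff g k = (-1) ^+ k * g 0%N - t.
  rewrite /forward_diff big_ord_recl bin0 addn0 mul1r -sumrN; congr (_ + _).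
  by apply: eq_bigr => j _; rewrite lift0 addnS exprS mulN1r mulrN mulNr.
by rewrite exprS; ring.
Qed.

Lemma newton_forward_diff g n :
  \sum_(k < n.+1) 'C(n, k)%:R * forward_diff g k = g n.
Proof.
elim: n g => [|n IHn] g.
  by rewrite big_ord1 /forward_diff big_ord1 !bin0 !mul1r.
rewrite -(IHn (fun j => g j.+1)) big_ord_recl bin0.
under eq_bigr => i _ do rewrite lift0 binS natrD mulrDl.
rewrite big_split /= addrA.
have -> : 1 * forward_diff g 0 + \sum_(i < n.+1) 'C(n, i.+1)%:R * forward_diff g i.+1
          = \sum_(k < n.+1) 'C(n, k)%:R * forward_diff g k.
  by rewrite big_ord_recr /= bin_small // mul0r addr0 big_ord_recl bin0.
rewrite -big_split; apply: eq_bigr => k _.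
by rewrite -forward_diffS mulrDr addrC.
Qed.

Lemma forward_diff_signE g k :
  (-1) ^+ k * forward_diff g k
  = g 0%N - \sum_(1 <= j < k.+1) 'C(k, j)%:R * (-1) ^+ j.+1 * g j.
Proof.
have sign j : (-1) ^+ k * (-1) ^+ (k + j) = (-1) ^+ j :> R.
  by rewrite exprD signrMK.
rewrite /forward_diff mulr_sumr big_ord_recl big_add1 big_mkord -sumrN.
congr (_ + _); first by rewrite bin0 mul1r mulrA sign expr0 mul1r.
apply: eq_bigr => j _; rewrite lift0 mulrA mulrCA sign [(-1) ^+ j.+2]exprS.
by rewrite mulN1r mulrN mulNr opprK.
Qed.

End ForwardDifference.

Section AffinePowers.
Variables (R : fieldType) (a b : R).
Let L : {poly R} := a *: 'X + b%:P.

Lemma derivn_affine_pow n k :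
  (L ^+ n)^`(k) = ((n ^_ k)%:R * a ^+ k) *: L ^+ (n - k).
Proof.
have dL : L^`() = a%:P by rewrite derivD derivZ derivX derivC addr0 alg_polyC.
elim: k => [|k IHk]; first by rewrite derivn0 ffactn0 expr0 mulr1 scale1r subn0.
rewrite derivnS IHk derivZ deriv_exp dL ffactnSr natrM exprS subnS.
rewrite -!mul_polyC !polyCM -mulr_natr !polyC_natr.
ring.
Qed.

Hypothesis a_neq0 : a != 0.

Lemma size_affine_pow n : size (L ^+ n) = n.+1.
Proof.
have sizeL : size L = 2%N.
  by rewrite /L -mul_polyC size_MXaddC polyC_eq0 (negbTE a_neq0) size_polyC a_neq0.
have L_neq0 : L != 0 by rewrite -size_poly_eq0 sizeL.
by rewrite -[LHS]prednK ?lt0n ?size_poly_eq0 ?expf_neq0 // size_exp sizeL mul1n.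
Qed.

Lemma lead_coef_affine_pow n : lead_coef (L ^+ n) = a ^+ n.
Proof.
rewrite lead_coef_exp /L lead_coefDl ?lead_coefZ ?lead_coefX ?mulr1 //.
by rewrite size_scale // size_polyX size_polyC; case: (b != 0).
Qed.

Lemma size_sub_affine_pow (p : {poly R}) N : (size p <= N.+1)%N ->
  (size (p - (p`_N / a ^+ N) *: L ^+ N)%R <= N)%N.
Proof.
move=> le_p_N1; apply/leq_sizeP => j; rewrite leq_eqVlt => /predU1P[<-|lt_N_j].
  have lead : (L ^+ N)`_N = a ^+ N.
    by rewrite -(lead_coef_affine_pow N) lead_coefE size_affine_pow.
  by rewrite coefB coefZ lead mulfVK ?subrr ?expf_neq0.
rewrite coefB coefZ [p`_j]nth_default ?[(L ^+ N)`_j]nth_default ?size_affine_pow.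
- by rewrite mulr0 subrr.
- exact: lt_N_j.
- exact: leq_trans le_p_N1 lt_N_j.
Qed.

Lemma linear_eq_on_affine_pow (M : lmodType R) (f g : {linear {poly R} -> M}) N :
  (forall n, (n < N)%N -> f (L ^+ n) = g (L ^+ n)) ->
  forall p : {poly R}, (size p <= N)%N -> f p = g p.
Proof.
elim: N => [|N IHN] eq_fg p le_p_N.
  by move: le_p_N; rewrite size_poly_leq0 => /eqP->; rewrite !linear0.
have := size_sub_affine_pow le_p_N; set r := (p - _)%R => le_r_N.
have -> : p = r + (p`_N / a ^+ N) *: L ^+ N by rewrite subrK.
clearbody r; rewrite !linearD !linearZ /= eq_fg // (IHN _ r) // => n lt_n_N.
by rewrite eq_fg // ltnW.
Qed.

End AffinePowers.

Section TruncatedDiffOp.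
Variable R : comNzRingType.
Implicit Types (Q : nat -> {poly R}) (p : {poly R}).

Definition diff_op_upto N Q p := \sum_(k < N) Q k * p^`(k).

Fact diff_op_upto_is_linear N Q : linear (diff_op_upto N Q).
Proof.
move=> c p q; rewrite /diff_op_upto scaler_sumr -big_split; apply: eq_bigr => k _.
by rewrite derivnD derivnZ mulrDr scalerAr.
Qed.

HB.instance Definition _ N Q :=
  GRing.isLinear.Build R {poly R} {poly R} _ (diff_op_upto N Q)
    (diff_op_upto_is_linear N Q).

Lemma diff_op_uptoE N Q p : (size p <= N)%N ->
  diff_op_upto N Q p = \sum_(k < size p) Q k * p^`(k).
Proof.
move=> le_p_N; rewrite (big_ord_widen N (fun k => Q k * p^`(k)) le_p_N).
rewrite [RHS]big_mkcond; apply: eq_bigr => k _.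
by case: ltnP => // /derivn_poly0->; rewrite mulr0.
Qed.

End TruncatedDiffOp.

Lemma diff_op_rep_uniq (R : realFieldType) (T : {poly R} -> {poly R})
    (Q Q' : nat -> {poly R}) :
  diff_op_rep T Q -> diff_op_rep T Q' -> Q =1 Q'.
Proof.
move=> repQ repQ' k; elim/ltn_ind: k => k IHk.
have := repQ' 'X^k; rewrite repQ size_polyXn !big_ord_recr /=.
under [X in _ = X + _]eq_bigr => i _ do rewrite -IHk //.
move/addrI; rewrite derivnXn subnn expr0 ffactnn => /mulIf; apply.
by rewrite -polyC_natr polyC_eq0 pnatr_eq0 -lt0n fact_gt0.
Qed.

Lemma monotone_rep_of_size (R : realFieldType) (Q : nat -> {poly R}) :
  (forall k, Q k = 0 \/ size (Q k) = k.+1) -> monotone_rep Q.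
Proof.
move=> sizeQ k l lt_kl; case: (sizeQ k) => [-> | ->]; rewrite ?eqxx //.
by case: (sizeQ l) => [-> | ->]; rewrite ?eqxx // => _ _; apply: ltnW.
Qed.

Lemma eigen_scaleK (R : fieldType) (V : lmodType R) (T : {linear V -> V})
    (c g : R) (v : V) :
  c != 0 -> T (c *: v) = g *: (c *: v) -> T v = g *: v.
Proof. by move=> c_neq0; rewrite linearZ scalerA mulrC -scalerA => /(scalerI c_neq0). Qed.

Section EigenOperator.
Variables (R : realFieldType) (alpha beta : R) (gamma : nat -> R).
Variable T : {linear {poly R} -> {poly R}}.
Hypothesis alpha_neq0 : alpha != 0.
Let L : {poly R} := alpha *: 'X + beta%:P.
Hypothesis T_eigen : forall n, T (L ^+ n) = gamma n *: L ^+ n.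

Definition eigen_coef k := forward_diff gamma k / (k`!%:R * alpha ^+ k).
Definition eigen_rep k := eigen_coef k *: L ^+ k.

Lemma eigen_coefE k :
  eigen_coef k = (-1) ^+ k / (k`!%:R * alpha ^+ k)
                 * (gamma 0%N - \sum_(1 <= j < k.+1) 'C(k, j)%:R * (-1) ^+ j.+1 * gamma j).
Proof. by rewrite -forward_diff_signE mulrAC signrMK. Qed.

Lemma eigen_rep_on_affine_pow n :
  \sum_(k < n.+1) eigen_rep k * (L ^+ n)^`(k) = gamma n *: L ^+ n.
Proof.
rewrite -[in RHS](newton_forward_diff gamma n) scaler_suml.
apply: eq_bigr => k _; have le_kn : (k <= n)%N by rewrite -ltnS.
rewrite derivn_affine_pow -scalerAl -scalerAr scalerA -exprD subnKC //.
congr (_ *: _); rewrite /eigen_coef -bin_ffact natrM.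
have fact_neq0 : k`!%:R != 0 :> R by rewrite pnatr_eq0 -lt0n fact_gt0.
by field; rewrite fact_neq0 expf_neq0.
Qed.

Lemma diff_op_rep_eigen : diff_op_rep T eigen_rep.
Proof.
move=> p; rewrite -(diff_op_uptoE _ (leqnn (size p))).
apply: (linear_eq_on_affine_pow (b := beta) (f := T)
         (g := diff_op_upto (size p) eigen_rep) alpha_neq0 _ (leqnn _)) => n lt_n_p.
by rewrite /= diff_op_uptoE size_affine_pow // eigen_rep_on_affine_pow T_eigen.
Qed.

Lemma size_eigen_rep k : eigen_rep k = 0 \/ size (eigen_rep k) = k.+1.
Proof.
rewrite /eigen_rep; have [->|coef_neq0] := eqVneq (eigen_coef k) 0.
  by left; rewrite scale0r.
by right; rewrite size_scale // size_affine_pow.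
Qed.

End EigenOperator.

Theorem mainTheorem7 (R : realFieldType) (alpha beta : R) (c gamma : nat -> R)
  (T : {linear {poly R} -> {poly R}}) :
  alpha != 0 ->
  (forall k, c k != 0) ->
  (forall n, T (c n *: (alpha *: 'X + beta%:P) ^+ n)
             = gamma n *: (c n *: (alpha *: 'X + beta%:P) ^+ n)) ->
  (exists Q : nat -> {poly R}, diff_op_rep T Q) /\
  (forall Q : nat -> {poly R}, diff_op_rep T Q ->
     Q 0%N = (gamma 0%N)%:P /\
     (forall k : nat, (1 <= k)%N ->
        Q k = ((-1) ^+ k / (k`!%:R * alpha ^+ k)
               * (gamma 0%N - \sum_(1 <= j < k.+1)
                     'C(k, j)%:R * (-1) ^+ j.+1 * gamma j))
              *: (alpha *: 'X + beta%:P) ^+ k) /\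
     (forall k : nat, Q k = 0 \/ size (Q k) = k.+1) /\
     monotone_rep Q).
Proof.
move=> alpha_neq0 c_neq0 T_cq.
have T_eigen n := eigen_scaleK (c_neq0 n) (T_cq n).
have rep_eigen := diff_op_rep_eigen alpha_neq0 T_eigen.
split; first by exists (eigen_rep alpha beta gamma).
move=> Q repQ; have QE := diff_op_rep_uniq repQ rep_eigen.
have sizeQ k : Q k = 0 \/ size (Q k) = k.+1.
  by rewrite QE; apply: size_eigen_rep.
split.
  rewrite QE /eigen_rep eigen_coefE big_geq // subr0 expr0 fact0 mulr1 divr1.
  by rewrite mul1r alg_polyC.
split; first by move=> k _; rewrite QE /eigen_rep eigen_coefE.
by split; last exact: monotone_rep_of_size.
Qed.
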